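(* Let $d\geq1$, $L\geq0$ be integers and $r=\binom{d+L}{d}$. Let $\mathcal{H}_{d,L}\subseteq\mathrm{L}^2(\mathbb{C}^d,\mathbb{C})$ be the span of the functions \[ \sqrt{C^L_{\alpha_1,\ldots,\alpha_d}}\,\frac{z_1^{\alpha_1}\cdots z_d^{\alpha_d}}{(1+\|z\|^2)^{\frac{d+L+1}{2}}},\qquad \alpha_1+\cdots+\alpha_d\leq L,\quad C^L_{\alpha_1,\ldots,\alpha_d}=\frac{1}{\pi^d}\frac{(d+L)!}{\alpha_1!\cdots\alpha_d!\,(L-(\alpha_1+\cdots+\alpha_d))!}, \] an $r$-dimensional subspace (with Lebesgue measure on $\mathbb{C}^d$) whose reproducing kernel is $K(z,w)=\frac{r\,d!}{\pi^d}\frac{(1+\langle z,w\rangle)^L}{(1+\|z\|^2)^{\frac{d+L+1}{2}}(1+\|w\|^2)^{\frac{d+L+1}{2}}}$. Let $\psi_d:\mathbb{C}^d\to\mathbb{P}(\mathbb{C}^{d+1})$, $\psi_d(z)=(1,z)$, and let $\mathcal{H}_*=\{g\circ\psi_d^{-1}\sqrt{|\mathrm{Jac}(\psi_d^{-1})|}: g\in\mathcal{H}_{d,L}\}\subseteq\mathrm{L}^2(\mathbb{P}(\mathbb{C}^{d+1}),\mathbb{C})$ (functions defined almost everywhere). Then the projection determinantal point process of $r$ points in $\mathbb{P}(\mathbb{C}^{d+1})$ associated with $\mathcal{H}_*$ (the pushforward under $\psi_d$ of the determinantal point process associated with $\mathcal{H}_{d,L}$) has kernel $K_*^{(r,d)}$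 satisfying \[ \left|K_*^{(r,d)}(p,q)\right|=\frac{r\,d!}{\pi^d}\left|\left\langle\frac{p}{\|p\|},\frac{q}{\|q\|}\right\rangle\right|^L . \] This process is called the projective ensemble.
   Context: $\mathbb{P}(\mathbb{C}^{d+1})$ carries the Fubini–Study metric normalized so that the distance satisfies $\sin d_{\mathbb{P}}(p,q)=\sqrt{1-\frac{|\langle p,q\rangle|^2}{\|p\|^2\|q\|^2}}$ (total volume $\pi^d/d!$), and its Riemannian volume measure; $\mathrm{Jac}$ denotes the Jacobian determinant. For a finite-dimensional subspace $H$ of $\mathrm{L}^2$ with orthonormal basis $\varphi_1,\ldots,\varphi_n$, its reproducing kernel is $K_H(x,y)=\sum_i\varphi_i(x)\overline{\varphi_i(y)}$, and the associated projection determinantal point process is the process of $n$ points with $k$-point joint intensities $\det(K_H(x_i,x_j))_{i,j=1}^k$ with respect to the underlying measure. *)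

From HB Require Import structures.
From mathcomp Require Import all_boot all_order all_algebra.
From mathcomp Require Import all_classical all_reals.
From mathcomp Require Import topology normedtype trigo.
From mathcomp Require Import complex.

Set Implicit Arguments.
Unset Strict Implicit.
Unset Printing Implicit Defensive.

Import Order.TTheory GRing.Theory Num.Theory.
Import numFieldTopology.Exports numFieldNormedType.Exports.
Local Open Scope classical_set_scope.
Local Open Scope ring_scope.
Local Open Scope complex_scope.

Section ProjEnsemble.
Variable R : realType.
Local Notation C := (R[i]).

Definition cvec (n : nat) := 'I_n -> C.

Definition cabs (z : C) : R := Num.sqrt (complex.Re z ^+ 2 + complex.Im z ^+ 2).

Definition cinner n (p q : cvec n) : C := \sum_(i < n) p i * conjc (q i).

Definition cnorm n (p : cvec n) : R := Num.sqrt (\sum_(i < n) cabs (p i) ^+ 2).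

Definition cscale n (a : C) (p : cvec n) : cvec n := fun i => a * p i.
Definition cadd n (p q : cvec n) : cvec n := fun i => p i + q i.

(** Fubini--Study distance on P(C^{d+1}) (points represented by nonzero
    vectors): sin d(p,q) = sqrt(1 - |<p,q>|^2/(||p||^2 ||q||^2)), d in [0,pi/2]. *)
Definition dFS n (p q : cvec n) : R :=
  asin (Num.sqrt (1 - cabs (cinner p q) ^+ 2 / (cnorm p ^+ 2 * cnorm q ^+ 2))).

Definition psi d (z : cvec d) : cvec d.+1 :=
  fun i => if unlift ord0 i is Some j then z j else 1.
Definition psiinv d (p : cvec d.+1) : cvec d :=
  fun j => p (lift ord0 j) / p ord0.

(** Fubini--Study Riemannian metric pulled back by psi_d:
    g_z(v) = lim_{t -> 0} (d(psi z, psi (z + t v)) / t)^2 *)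
Definition fs_quad d (z v : cvec d) : R :=
  lim ((fun t : R => (dFS (psi z) (psi (cadd z (cscale t%:C v))) / t) ^+ 2) @ (0 : R)^').

(** standard real basis of C^d = R^{2d}: e_1,..,e_d, i e_1,..,i e_d *)
Definition rbasis d (k : 'I_(d + d)) : cvec d :=
  fun j => match fintype.split k with
           | inl a => if j == a then 1 else 0
           | inr a => if j == a then 'i else 0
           end.

(** Gram matrix of the metric in real coordinates (polarization) *)
Definition fs_gram d (z : cvec d) : 'M[R]_(d + d) :=
  \matrix_(a, b) ((fs_quad z (cadd (rbasis a) (rbasis b))
                  - fs_quad z (cadd (rbasis a) (cscale (-1) (rbasis b)))) / 4).

(** Jacobian of psi_d : (C^d, Lebesgue) -> (P(C^{d+1}), vol_FS):
    the Riemannian volume density sqrt(det g) in the chart *)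
Definition jac_psi d (z : cvec d) : R := Num.sqrt (\det (fs_gram z)).

Definition jac_psiinv d (p : cvec d.+1) : R := (jac_psi (psiinv p))^-1.

Definition mindex d L := {ffun 'I_d -> 'I_L.+1}.
Definition msize d L (a : mindex d L) : nat := \sum_(i < d) (a i : nat).

Definition Ccoef d L (a : mindex d L) : R :=
  (d + L)`!%:R / (pi ^+ d * (\prod_(i < d) (a i)`!)%:R * (L - msize a)`!%:R).

Definition phi d L (a : mindex d L) (z : cvec d) : C :=
  (Num.sqrt (Ccoef a))%:C * (\prod_(i < d) z i ^+ a i)
  / (Num.sqrt ((1 + cnorm z ^+ 2) ^+ (d + L + 1)))%:C.

Definition phistar d L (a : mindex d L) (p : cvec d.+1) : C :=
  phi a (psiinv p) * (Num.sqrt `|jac_psiinv p|)%:C.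

Definition Kstar d L (p q : cvec d.+1) : C :=
  \sum_(a : mindex d L | (msize a <= L)%N) phistar a p * conjc (phistar a q).

End ProjEnsemble.

(* In the chart psi_d, with A = 1 + |z|^2, the Fubini--Study distance along the
   line z + t v satisfies sin^2 d = t^2 (A |v|^2 - |<z,v>|^2) / (A (1 + |z + t v|^2))
   (a Lagrange identity), so the metric is A^-2 (A |v|^2 - |<z,v>|^2).  Its real
   Gram matrix is A^-2 (A - Y Y^T) with Y^T Y = |z|^2, whose determinant gives the
   volume density A^-(d+1).  Hence phi*_a[p] = sqrt(C_a) z^a A^(-L/2) for
   z = psi_d^-1 [p], and the multinomial theorem sums the kernel to
   (d+L)!/(pi^d L!) (1 + <z,w>)^L (A_z A_w)^(-L/2).  Finally
   <p,q> = p_0 conj(q_0) (1 + <z,w>) and ||p|| = |p_0| sqrt(A_z). *)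

From mathcomp Require Import all_boot all_order all_algebra.
From mathcomp Require Import all_classical all_reals.
From mathcomp Require Import topology normedtype trigo derive realfun.
From mathcomp Require Import complex.
From mathcomp Require Import ring.
Set Implicit Arguments.
Unset Strict Implicit.
Unset Printing Implicit Defensive.

Import Order.TTheory GRing.Theory Num.Theory.
Import numFieldTopology.Exports numFieldNormedType.Exports.
Local Open Scope ring_scope.
Local Open Scope complex_scope.

Section HermitianSpace.
Context {R : realType}.
Local Notation C := (R[i]).
Local Notation toC := (real_complex R).

Lemma cabsE (x : C) : (cabs x)%:C = `|x|. Proof. by rewrite normc_def. Qed.

Lemma cabs_ge0 (x : C) : 0 <= cabs x. Proof. exact: sqrtr_ge0. Qed.

Lemma sqr_cabs (x : C) : cabs x ^+ 2 = complex.Re x ^+ 2 + complex.Im x ^+ 2.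
Proof. by rewrite sqr_sqrtr // addr_ge0 // sqr_ge0. Qed.

Lemma sqr_cabsC (x : C) : (cabs x ^+ 2)%:C = x * conjc x.
Proof. by rewrite rmorphXn /= cabsE normCK. Qed.

Lemma cabsM (x y : C) : cabs (x * y) = cabs x * cabs y.
Proof. by apply: complexI; rewrite rmorphM /= !cabsE normrM. Qed.

Lemma cabsX (x : C) n : cabs (x ^+ n) = cabs x ^+ n.
Proof. by apply: complexI; rewrite rmorphXn /= !cabsE normrX. Qed.

Lemma conjcM (x y : C) : conjc (x * y) = conjc x * conjc y.
Proof. exact: rmorphM. Qed.

Lemma cabsJ (x : C) : cabs (conjc x) = cabs x.
Proof. by case: x => a b; rewrite /cabs /= sqrrN. Qed.

Lemma ger0_cabs (x : R) : 0 <= x -> cabs x%:C = x.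
Proof. by move=> x0; apply: complexI; rewrite cabsE ger0_norm // ler0c. Qed.

Lemma cabs_polarization (x y : C) :
  cabs (x + y) ^+ 2 - cabs (x - y) ^+ 2
  = 4 * (complex.Re x * complex.Re y + complex.Im x * complex.Im y).
Proof. by case: x => a b; case: y => c e; rewrite !sqr_cabs /=; ring. Qed.

Lemma sqr_cnorm n (p : cvec R n) : cnorm p ^+ 2 = \sum_i cabs (p i) ^+ 2.
Proof. by rewrite sqr_sqrtr // sumr_ge0 // => i _; rewrite sqr_ge0. Qed.

Lemma sqr_cnormC n (p : cvec R n) : (cnorm p ^+ 2)%:C = cinner p p.
Proof. by rewrite sqr_cnorm rmorph_sum /=; apply: eq_bigr => i _; exact: sqr_cabsC. Qed.

Lemma cinnerC n (u w : cvec R n) : cinner w u = conjc (cinner u w).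
Proof.
by rewrite /cinner rmorph_sum; apply: eq_bigr => i _; rewrite rmorphM /= conjcK mulrC.
Qed.

Lemma cinnerDl n (u v w : cvec R n) : cinner (cadd u v) w = cinner u w + cinner v w.
Proof. by rewrite /cinner -big_split; apply: eq_bigr => i _; rewrite mulrDl. Qed.

Lemma cinnerDr n (u v w : cvec R n) : cinner w (cadd u v) = cinner w u + cinner w v.
Proof. by rewrite /cinner -big_split; apply: eq_bigr => i _; rewrite rmorphD mulrDr. Qed.

Lemma cinnerZl n a (u w : cvec R n) : cinner (cscale a u) w = a * cinner u w.
Proof. by rewrite /cinner mulr_sumr; apply: eq_bigr => i _; rewrite mulrA. Qed.

Lemma cinnerZr n a (u w : cvec R n) : cinner w (cscale a u) = conjc a * cinner w u.
Proof.
by rewrite /cinner mulr_sumr; apply: eq_bigr => i _; rewrite rmorphM /= mulrCA.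
Qed.

Lemma cinner_psi d (a b : cvec R d) : cinner (psi a) (psi b) = 1 + cinner a b.
Proof.
rewrite /cinner big_ord_recl /psi unlift_none conjc1 mulr1; congr (_ + _).
by apply: eq_bigr => i _; rewrite liftK.
Qed.

Lemma sqr_cnorm_psi d (a : cvec R d) : cnorm (psi a) ^+ 2 = 1 + cnorm a ^+ 2.
Proof. by apply: complexI; rewrite rmorphD /= !sqr_cnormC cinner_psi. Qed.

Lemma cnorm_polarization n (u w : cvec R n) :
  cnorm (cadd u w) ^+ 2 - cnorm (cadd u (cscale (-1) w)) ^+ 2
  = 4 * complex.Re (cinner u w).
Proof.
apply: complexI; rewrite rmorphB [RHS]rmorphM /= !sqr_cnormC ReJ_add.
rewrite !cinnerDl !cinnerDr !cinnerZl !cinnerZr rmorphN1 rmorph_nat /=.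
rewrite [cinner w u]cinnerC.
by field.
Qed.

Lemma sqr_cnorm_eq0 n (v : cvec R n) : cnorm v ^+ 2 = 0 -> forall i, v i = 0.
Proof.
rewrite sqr_cnorm => /psumr_eq0P v0 i.
have /eqP := v0 (fun j _ => sqr_ge0 (cabs (v j))) i isT.
by rewrite sqrf_eq0 => /eqP/(congr1 toC); rewrite cabsE => /normr0_eq0.
Qed.

Lemma cauchy_schwarz n (u v : cvec R n) :
  cabs (cinner u v) ^+ 2 <= cnorm u ^+ 2 * cnorm v ^+ 2.
Proof.
set a := cnorm v ^+ 2; set b := cinner u v.
have [a0|apos] := eqVneq a 0.
  have v0 := sqr_cnorm_eq0 a0.
  have -> : b = 0 by rewrite /b /cinner big1 // => i _; rewrite v0 conjc0 mulr0.
  by rewrite a0 mulr0 /cabs /= expr0n /= addr0 sqrtr0 expr0n.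
have {apos}apos : 0 < a by rewrite lt_def apos sqr_ge0.
pose w := cadd (cscale a%:C u) (cscale (- b) v).
have key : cnorm w ^+ 2 = a * (a * cnorm u ^+ 2 - cabs b ^+ 2).
  apply: complexI.
  rewrite (rmorphM toC a) (rmorphB toC) (rmorphM toC a) /= sqr_cabsC sqr_cnormC.
  rewrite /w cinnerDl !cinnerDr !cinnerZl !cinnerZr.
  rewrite [cinner v u]cinnerC -/b -!sqr_cnormC -/a conjc_real rmorphN /=.
  ring.
have : 0 <= a * (a * cnorm u ^+ 2 - cabs b ^+ 2) by rewrite -key sqr_ge0.
by rewrite pmulr_rge0 // subr_ge0 mulrC.
Qed.

End HermitianSpace.

Section Asinc.
Local Open Scope classical_set_scope.
Context {R : realType}.

Definition asinc (x : R) := if x == 0 then 1 else asin x / x.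

Lemma asin0 : asin (0 : R) = 0.
Proof. by rewrite -{1}(sin0 R) sinK // in_itv /= oppr_le0 divr_ge0 ?pi_ge0. Qed.

Lemma asincE (x : R) : asin x = asinc x * x.
Proof.
rewrite /asinc; case: eqP => [->|/eqP x0]; first by rewrite asin0 mulr0.
by rewrite divfK.
Qed.

(* [asinc] is the difference quotient of [asin] at 0, and [asin^`() 0 = 1]. *)
Lemma asinc_continuous0 : {for 0, continuous asinc}.
Proof.
apply/continuous_withinNx.
have asin'0 : is_derive (0 : R) 1 asin (Num.sqrt (1 - 0 ^+ 2))^-1.
  by apply: is_derive1_asin; rewrite ltrN10 ltr01.
have asin_quot : derivable (@asin R) 0 1 := @ex_derive _ _ _ _ _ _ _ asin'0.
have asin'0E := @derive_val _ _ _ _ _ _ _ asin'0.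
rewrite /derive in asin'0E; rewrite /derivable asin'0E in asin_quot.
rewrite expr0n /= subr0 sqrtr1 invr1 {2}/asinc eqxx in asin_quot *.
apply: cvg_trans asin_quot; apply: near_eq_cvg; near=> h.
rewrite /asinc ifF; last by apply/negbTE; near: h; exact: nbhs_dnbhs_neq.
by rewrite /= addr0 scaler1 asin0 subr0 mulrC.
Unshelve. all: by end_near.
Qed.

Lemma asin_sqrt_quot_cvg (m : R -> R) (l : R) : (forall t, 0 <= m t) ->
  m t @[t --> 0^'] --> l ->
  ((asin (Num.sqrt (t ^+ 2 * m t)) / t) ^+ 2) @[t --> 0^'] --> l.
Proof.
move=> m_ge0 ml; set s := fun t => Num.sqrt (t ^+ 2 * m t).
have s0 : s t @[t --> 0^'] --> 0.
  have t2m : (t ^+ 2 * m t) @[t --> 0^'] --> 0 ^+ 2 * l.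
    by apply: cvgM => //; rewrite expr2; apply: cvgM; exact: cvg_within.
  rewrite expr0n mul0r in t2m.
  by have := continuous_cvg _ (@sqrt_continuous R 0) t2m; rewrite sqrtr0; apply.
have asinc_s : asinc (s t) @[t --> 0^'] --> asinc 0.
  by apply: continuous_cvg => //; exact: asinc_continuous0.
rewrite {2}/asinc eqxx in asinc_s.
rewrite -[l]mul1r -[1](mulr1 1).
apply: cvg_trans (cvgM (cvgM asinc_s asinc_s) ml); apply: near_eq_cvg; near=> t.
have t0 : t != 0 by near: t; exact: nbhs_dnbhs_neq.
rewrite /= /s asincE expr_div_n exprMn sqr_sqrtr; last by rewrite mulr_ge0 ?sqr_ge0.
by field.
Unshelve. all: by end_near.
Qed.

End Asinc.

Section FubiniStudyMetric.
Local Open Scope classical_set_scope.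
Context {R : realType}.
Local Notation toC := (real_complex R).

Lemma sqr_cnorm_line d (z v : cvec R d) (t : R) :
  cnorm (cadd z (cscale t%:C v)) ^+ 2
  = cnorm z ^+ 2 + t * (2 * complex.Re (cinner z v)) + t ^+ 2 * cnorm v ^+ 2.
Proof.
apply: complexI; rewrite !rmorphD /= !sqr_cnormC.
rewrite (rmorphM toC t) (rmorphM toC 2) (rmorphM toC (t ^+ 2)) /=.
rewrite rmorphXn rmorph_nat /= sqr_cnormC ReJ_add.
rewrite cinnerDl !cinnerDr !cinnerZl !cinnerZr conjc_real [cinner v z]cinnerC.
by field.
Qed.

Lemma lagrange_psi_line d (z v : cvec R d) (t : R) :
  (1 + cnorm z ^+ 2) * (1 + cnorm (cadd z (cscale t%:C v)) ^+ 2)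
    - cabs (cinner (psi z) (psi (cadd z (cscale t%:C v)))) ^+ 2
  = t ^+ 2 * ((1 + cnorm z ^+ 2) * cnorm v ^+ 2 - cabs (cinner z v) ^+ 2).
Proof.
apply: complexI.
rewrite rmorphB /= sqr_cabsC -cinnerC !cinner_psi.
rewrite [RHS](rmorphM toC (t ^+ 2)) rmorphB /= sqr_cabsC -cinnerC.
rewrite !(rmorphM toC (1 + _)) /= !rmorphD rmorph1 /= !sqr_cnormC rmorphXn /=.
rewrite !cinnerDl !cinnerDr !cinnerZl !cinnerZr conjc_real.
by ring.
Qed.

Lemma fs_quadE d (z v : cvec R d) :
  fs_quad z v = ((1 + cnorm z ^+ 2) * cnorm v ^+ 2 - cabs (cinner z v) ^+ 2)
                / (1 + cnorm z ^+ 2) ^+ 2.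
Proof.
set A := 1 + cnorm z ^+ 2; set G := A * _ - _.
pose Q t := 1 + cnorm (cadd z (cscale t%:C v)) ^+ 2.
have A_gt0 : 0 < A by rewrite ltr_wpDr ?sqr_ge0.
have Q_gt0 t : 0 < Q t by rewrite ltr_wpDr ?sqr_ge0.
have G_ge0 : 0 <= G.
  by rewrite subr_ge0 (le_trans (cauchy_schwarz z v)) // ler_wpM2r ?sqr_ge0 ?lerDr.
pose m t := G / (A * Q t).
have m_ge0 t : 0 <= m t by rewrite divr_ge0 // mulr_ge0 // ltW.
have dFS_line t :
    dFS (psi z) (psi (cadd z (cscale t%:C v))) = asin (Num.sqrt (t ^+ 2 * m t)).
  rewrite /dFS !sqr_cnorm_psi -/A -/(Q t) /m mulrA -lagrange_psi_line -/A -/(Q t).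
  by rewrite mulrBl divff // mulf_neq0 // gt_eqF.
have Q_cvg : Q t @[t --> 0^'] --> A.
  pose b := 2 * complex.Re (cinner z v); pose c := cnorm v ^+ 2.
  have Q_poly : Q t @[t --> 0^'] --> 1 + (cnorm z ^+ 2 + 0 * b + 0 ^+ 2 * c).
    apply: cvg_trans (_ : (1 + (cnorm z ^+ 2 + t * b + t ^+ 2 * c)) @[t --> 0^'] --> _).
      by apply: near_eq_cvg; near=> t; rewrite /Q sqr_cnorm_line.
    apply: cvgD; first exact: cvg_cst.
    apply: cvgD; first apply: cvgD.
    - exact: cvg_cst.
    - by apply: cvgMl; exact: cvg_within.
    - by apply: cvgMl; rewrite expr2; apply: cvgM; exact: cvg_within.
  by rewrite mul0r expr0n /= mul0r !addr0 in Q_poly.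
have m_cvg : m t @[t --> 0^'] --> G / (A * A).
  by apply: cvgMr; apply: cvgV; [rewrite mulf_neq0 // gt_eqF | apply: cvgMr].
rewrite /fs_quad -[A ^+ 2]/(A * A); apply: norm_cvg_lim.
apply: cvg_trans (asin_sqrt_quot_cvg m_ge0 m_cvg).
apply: near_eq_cvg; near=> t.
by rewrite /= dFS_line.
Unshelve. all: by end_near.
Qed.

End FubiniStudyMetric.

(* Compare the two block factorizations of [[s, Y], [Y^T, 1]]. *)
Lemma det_scalar_sub_mul_tr (F : fieldType) n k (Y : 'M[F]_(n, k)) (s r : F) :
  s != 0 -> Y^T *m Y = r%:M ->
  \det (s%:M - Y *m Y^T) = s ^+ n * (1 - s^-1 * r) ^+ k.
Proof.
move=> s0 YtY.
pose M := block_mx (s%:M : 'M_n) Y Y^T (1%:M : 'M_k).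
have M_lower : M = block_mx 1%:M Y 0 1%:M *m block_mx (s%:M - Y *m Y^T) 0 Y^T 1%:M.
  by rewrite mulmx_block !mul1mx !mulmx1 ?mul0mx ?mulmx0 ?addr0 ?add0r subrK.
have M_upper : M = block_mx s%:M 0 Y^T 1%:M *m
                   block_mx 1%:M (s^-1 *: Y) 0 (1%:M - s^-1 *: (Y^T *m Y)).
  rewrite mulmx_block !mul1mx !mulmx1 ?mul0mx ?mulmx0 ?addr0 ?add0r.
  by rewrite mul_scalar_mx scalerA mulfV // scale1r -scalemxAr addrC subrK.
have := congr1 determinant M_lower; rewrite {1}M_upper !det_mulmx.
rewrite !det_ublock !det_lblock !det1 !mul1r !mulr1 YtY scale_scalar_mx.
by rewrite -(raddfB (@scalar_mx _ k)) !det_scalar => <-.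
Qed.

Section FubiniStudyVolume.
Context {R : realType}.
Local Notation C := (R[i]).

Definition rbasis_index d (k : 'I_(d + d)) : 'I_d :=
  match fintype.split k with inl a => a | inr a => a end.
Definition rbasis_unit d (k : 'I_(d + d)) : C :=
  match fintype.split k with inl _ => 1 | inr _ => 'i end.

Lemma rbasisE d (k : 'I_(d + d)) j :
  rbasis R k j = (j == rbasis_index k)%:R * rbasis_unit k.
Proof.
rewrite /rbasis /rbasis_index /rbasis_unit.
by case: (fintype.split k) => a; case: eqP => _; rewrite ?mul1r ?mul0r.
Qed.

Lemma cinner_rbasis d (w : cvec R d) k :
  cinner w (rbasis R k) = w (rbasis_index k) * conjc (rbasis_unit k).
Proof.
rewrite /cinner (bigD1 (rbasis_index k)) //= rbasisE eqxx mul1r big1 ?addr0 // => j hj.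
by rewrite rbasisE (negbTE hj) mul0r conjc0 mulr0.
Qed.

Lemma Re_cinner_rbasis d (a b : 'I_(d + d)) :
  complex.Re (cinner (rbasis R a) (rbasis R b)) = (a == b)%:R.
Proof.
rewrite cinner_rbasis rbasisE -[a]splitK -[b]splitK /rbasis_index /rbasis_unit !unsplitK.
case: (fintype.split a) => a'; case: (fintype.split b) => b' /=.
- by rewrite (inj_eq (@lshift_inj _ _)) eq_sym; case: eqP => _ /=; simpc.
- have -> : (lshift d a' == rshift d b') = false.
    by apply/eqP => /(congr1 val) /= h; move: (ltn_ord a'); rewrite h ltnNge leq_addr.
  by case: eqP => _ /=; simpc.
- have -> : (rshift d a' == lshift d b') = false.
    by apply/eqP => /(congr1 val) /= h; move: (ltn_ord b'); rewrite -h ltnNge leq_addr.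
  by case: eqP => _ /=; simpc.
- by rewrite (inj_eq (@rshift_inj _ _)) eq_sym; case: eqP => _ /=; simpc.
Qed.

Definition re_im_mx d (z : cvec R d) : 'M[R]_(d + d, 2) :=
  \matrix_(a, k) (if k == ord0 then complex.Re (cinner z (rbasis R a))
                  else complex.Im (cinner z (rbasis R a))).

Lemma fs_gramE d (z : cvec R d) : fs_gram z =
  ((1 + cnorm z ^+ 2) ^+ 2)^-1 *: ((1 + cnorm z ^+ 2)%:M - re_im_mx z *m (re_im_mx z)^T).
Proof.
set A := 1 + cnorm z ^+ 2.
have A0 : A != 0 by rewrite gt_eqF // ltr_wpDr ?sqr_ge0.
apply/matrixP => a b; rewrite !mxE !fs_quadE -/A.
rewrite !cinnerDr cinnerZr rmorphN1 mulN1r.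
have := cnorm_polarization (rbasis R a) (rbasis R b); rewrite Re_cinner_rbasis.
have := cabs_polarization (cinner z (rbasis R a)) (cinner z (rbasis R b)).
rewrite !big_ord_recl big_ord0 addr0 !mxE /= mulr_natr.
set np := cnorm _ ^+ 2; set nm := cnorm _ ^+ 2.
set cp := cabs _ ^+ 2; set cm := cabs _ ^+ 2.
move=> /(canRL (addrK _)) -> /(canRL (addrK _)) ->.
by field.
Qed.

Lemma re_im_mx_gram d (z : cvec R d) :
  (re_im_mx z)^T *m re_im_mx z = (cnorm z ^+ 2)%:M.
Proof.
apply/matrixP => k l; rewrite !mxE big_split_ord /= sqr_cnorm.
under [X in _ = X *+ _]eq_bigr => j _ do rewrite sqr_cabs.
rewrite -sumrMnl -big_split /=; apply: eq_bigr => j _.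
rewrite !mxE !cinner_rbasis /rbasis_index /rbasis_unit.
rewrite (unsplitK (inl j)) (unsplitK (inr j)) conjc1 mulr1 /=.
case: (z j) => x y.
by case: k => [[|[|k]] hk] //; case: l => [[|[|l]] hl] //=; simpc; ring.
Qed.

Lemma jac_psiE d (z : cvec R d) : jac_psi z = ((1 + cnorm z ^+ 2) ^+ d.+1)^-1.
Proof.
set A := 1 + cnorm z ^+ 2.
have A_gt0 : 0 < A by rewrite ltr_wpDr ?sqr_ge0.
have A0 : A != 0 by rewrite gt_eqF.
rewrite /jac_psi fs_gramE -/A detZ (det_scalar_sub_mul_tr A0 (re_im_mx_gram z)).
have -> : 1 - A^-1 * cnorm z ^+ 2 = A^-1 by rewrite /A; field; rewrite -/A.
have -> : A ^- 2 ^+ (d + d) * (A ^+ (d + d) * A^-1 ^+ 2) = A ^- d.+1 ^+ 2.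
  rewrite -!exprVn -!exprM mul2n -addnn exprD -mulrA -[A ^+ (d + d)]invrK -exprVn.
  rewrite mulVKf ?expf_neq0 ?invr_eq0 // -exprD.
  by congr (_ ^+ _); rewrite muln2 -addnn addnS addn1 -addnS.
by rewrite sqrtr_sqr ger0_norm // invr_ge0 exprn_ge0 // ltW.
Qed.

End FubiniStudyVolume.

Section Multinomial.
Variable F : numFieldType.

Definition ffun_cons d N (t : 'I_N.+1) (a : {ffun 'I_d -> 'I_N.+1}) :
  {ffun 'I_d.+1 -> 'I_N.+1} :=
  [ffun i => if unlift ord0 i is Some j then a j else t].

Lemma ffun_cons_bij d N :
  bijective (fun p : 'I_N.+1 * {ffun 'I_d -> 'I_N.+1} => ffun_cons p.1 p.2).
Proof.
exists (fun a : {ffun 'I_d.+1 -> 'I_N.+1} => (a ord0, [ffun j => a (lift ord0 j)])).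
- move=> [t a] /=; rewrite /ffun_cons ffunE unlift_none; congr pair.
  by apply/ffunP => j; rewrite !ffunE liftK.
- move=> a /=; apply/ffunP => i; rewrite /ffun_cons ffunE.
  by case: unliftP => [j ->|->]; rewrite ?ffunE.
Qed.

Lemma big_ffun_cons (T : Type) (idx : T) (op : Monoid.com_law idx) d N
    (G : {ffun 'I_d.+1 -> 'I_N.+1} -> T) :
  \big[op/idx]_a G a = \big[op/idx]_(t : 'I_N.+1) \big[op/idx]_a G (ffun_cons t a).
Proof. by rewrite (reindex _ (onW_bij _ (@ffun_cons_bij d N))) pair_big. Qed.

Lemma big_ord_ffun_cons (T : Type) (idx : T) (op : Monoid.law idx) d N t
    (a : {ffun 'I_d -> 'I_N.+1}) (f : 'I_d.+1 -> 'I_N.+1 -> T) :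
  \big[op/idx]_(i < d.+1) f i (ffun_cons t a i)
  = op (f ord0 t) (\big[op/idx]_(i < d) f (lift ord0 i) (a i)).
Proof.
rewrite big_ord_recl /ffun_cons ffunE unlift_none; congr (op _ _).
by apply: eq_bigr => i _; rewrite ffunE liftK.
Qed.

Definition multinomial_coef d N (M : nat) (a : {ffun 'I_d -> 'I_N.+1}) : F :=
  M`!%:R / ((\prod_(i < d) (a i)`!)%:R * (M - \sum_(i < d) (a i : nat))`!%:R).

Lemma multinomial_coef_cons d N M (t : 'I_N.+1) (a : {ffun 'I_d -> 'I_N.+1}) :
  (t <= M)%N -> (\sum_(i < d) (a i : nat) <= M - t)%N ->
  multinomial_coef M (ffun_cons t a) = 'C(M, t)%:R * multinomial_coef (M - t) a.
Proof.
move=> tM aMt; rewrite /multinomial_coef.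
rewrite (big_ord_ffun_cons _ _ _ (fun _ k => (k : nat))).
rewrite (big_ord_ffun_cons _ _ _ (fun _ k => (k : nat)`!)) subnDA.
rewrite -(bin_fact tM) !natrM.
have fact_neq0 k : (k`!%:R : F) != 0 by rewrite pnatr_eq0 -lt0n fact_gt0.
have prod_neq0 : ((\prod_(i < d) (a i)`!)%:R : F) != 0.
  by rewrite pnatr_eq0 -lt0n prodn_gt0 // => i; rewrite fact_gt0.
by field; rewrite !fact_neq0 prod_neq0.
Qed.

Lemma multinomial_theorem d N M (x : 'I_d -> F) : (M <= N)%N ->
  \sum_(a : {ffun 'I_d -> 'I_N.+1} | (\sum_(i < d) (a i : nat) <= M)%N)
     multinomial_coef M a * \prod_(i < d) x i ^+ a i
  = (1 + \sum_(i < d) x i) ^+ M.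
Proof.
elim: d M x => [|d IH] M x MN.
  pose a0 : {ffun 'I_0 -> 'I_N.+1} := [ffun i => ord0].
  rewrite (bigD1 a0) ?big_ord0 //= big1 => [|a /andP[_ /eqP a_neq0]]; last first.
    by exfalso; apply: a_neq0; apply/ffunP => -[].
  rewrite /multinomial_coef !big_ord0 subn0 mul1r mulr1 !addr0 expr1n divff //.
  by rewrite pnatr_eq0 -lt0n fact_gt0.
set S := \sum_(i < d) x (lift ord0 i).
have row (t : 'I_N.+1) : \sum_(a | (\sum_(i < d.+1) (ffun_cons t a i : nat) <= M)%N)
      multinomial_coef M (ffun_cons t a) * \prod_(i < d.+1) x i ^+ ffun_cons t a i
    = if (t <= M)%N then 'C(M, t)%:R * x ord0 ^+ t * (1 + S) ^+ (M - t) else 0.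
  have sum_cons a : (\sum_(i < d.+1) (ffun_cons t a i : nat)
                     = t + \sum_(i < d) (a i : nat))%N.
    exact: (big_ord_ffun_cons _ _ _ (fun _ k => (k : nat))).
  have [tM|Mt] := leqP t M; last first.
    rewrite big_pred0 // => a; rewrite sum_cons.
    by apply/negbTE; rewrite -ltnNge ltn_addr.
  rewrite -(IH (M - t)%N) ?(leq_trans (leq_subr _ _)) // mulr_sumr.
  apply: eq_big => [a|a]; first by rewrite sum_cons -leq_subRL.
  rewrite sum_cons -leq_subRL // => aMt.
  rewrite multinomial_coef_cons // (big_ord_ffun_cons _ _ _ (fun i k => x i ^+ k)).
  by rewrite /=; ring.
rewrite big_mkcond big_ffun_cons.
under eq_bigr => t _ do rewrite -big_mkcond row.
rewrite -big_mkcond /= big_ord_recl -/S addrCA addrC exprDn.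
rewrite (big_ord_widen N.+1 (fun t => (1 + S) ^+ (M - t) * x ord0 ^+ t *+ 'C(M, t)));
  last by rewrite ltnS.
by apply: eq_bigr => t _; rewrite -mulr_natl; ring.
Qed.

End Multinomial.

Section ProjectiveKernel.
Context {R : realType}.
Local Notation C := (R[i]).
Local Notation toC := (real_complex R).

Lemma sqrtrX (s : R) n : 0 <= s -> Num.sqrt (s ^+ n) = Num.sqrt s ^+ n.
Proof.
move=> s0; elim: n => [|n IH]; first by rewrite !expr0 sqrtr1.
by rewrite !exprS sqrtrM // IH.
Qed.

Lemma lift_psiinv d (p : cvec R d.+1) j :
  p ord0 != 0 -> p (lift ord0 j) = p ord0 * psiinv p j.
Proof. by move=> p0; rewrite /psiinv mulrC divfK. Qed.

Lemma cinner_psiinv d (p q : cvec R d.+1) : p ord0 != 0 -> q ord0 != 0 ->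
  cinner p q = p ord0 * conjc (q ord0) * (1 + cinner (psiinv p) (psiinv q)).
Proof.
move=> p0 q0; rewrite {1}/cinner big_ord_recl mulrDr mulr1 mulr_sumr.
congr (_ + _); apply: eq_bigr => j _.
by rewrite (lift_psiinv _ p0) (lift_psiinv _ q0) rmorphM /=; ring.
Qed.

Lemma cnorm_psiinv d (p : cvec R d.+1) : p ord0 != 0 ->
  cnorm p = cabs (p ord0) * Num.sqrt (1 + cnorm (psiinv p) ^+ 2).
Proof.
move=> p0.
have sqr_cnorm_p : cnorm p ^+ 2 = cabs (p ord0) ^+ 2 * (1 + cnorm (psiinv p) ^+ 2).
  apply: complexI; rewrite (rmorphM toC (cabs _ ^+ 2)) /= rmorphD rmorph1 /=.
  rewrite !sqr_cnormC sqr_cabsC.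
  exact: cinner_psiinv.
rewrite -[cnorm p]ger0_norm ?sqrtr_ge0 // -sqrtr_sqr sqr_cnorm_p.
by rewrite sqrtrM ?sqr_ge0 // sqrtr_sqr ger0_norm ?cabs_ge0.
Qed.

Lemma phistarE d L (a : mindex d L) (p : cvec R d.+1) :
  phistar a p = (Num.sqrt (Ccoef R a))%:C * \prod_(i < d) psiinv p i ^+ a i
                * ((Num.sqrt (1 + cnorm (psiinv p) ^+ 2) ^+ L)^-1)%:C.
Proof.
rewrite /phistar /phi /jac_psiinv jac_psiE invrK.
set s := 1 + cnorm (psiinv p) ^+ 2.
have s_gt0 : 0 < s by rewrite ltr_wpDr ?sqr_ge0.
have sqrt_s_neq0 : Num.sqrt s != 0 by rewrite gt_eqF // sqrtr_gt0.
rewrite ger0_norm ?exprn_ge0 ?ltW // -mulrA -rmorphV; last first.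
  by rewrite unitfE sqrtr_eq0 lt_geF ?exprn_gt0.
rewrite -!mulrA -(rmorphM toC) /=; congr (_ * (_ * _%:C)).
rewrite !sqrtrX ?ltW // addn1 -addSn exprD invfM mulrAC mulVf ?mul1r //.
by rewrite expf_neq0.
Qed.

Lemma Ccoef_multinomial d L (a : mindex d L) :
  (Ccoef R a)%:C = ((d + L)`!%:R / (pi ^+ d * L`!%:R))%:C * multinomial_coef C L a.
Proof.
rewrite /Ccoef /multinomial_coef /msize !(rmorphM, fmorphV, rmorphXn, rmorph_nat) /=.
have pi_neq0 : (pi : R)%:C != 0.
  by apply/eqP => /(@complexI R) /eqP; rewrite gt_eqF ?pi_gt0.
have fact_neq0 k : (k`!%:R : C) != 0 by rewrite pnatr_eq0 -lt0n fact_gt0.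
have prod_neq0 : ((\prod_(i < d) (a i)`!)%:R : C) != 0.
  by rewrite pnatr_eq0 -lt0n prodn_gt0 // => i; rewrite fact_gt0.
by field; rewrite expf_neq0 // prod_neq0 !fact_neq0.
Qed.

Lemma KstarE d L (p q : cvec R d.+1) :
  Kstar L p q =
  ((d + L)`!%:R / (pi ^+ d * L`!%:R)
   * ((Num.sqrt (1 + cnorm (psiinv p) ^+ 2) ^+ L)^-1
      * (Num.sqrt (1 + cnorm (psiinv q) ^+ 2) ^+ L)^-1))%:C
  * (1 + cinner (psiinv p) (psiinv q)) ^+ L.
Proof.
set c := (d + L)`!%:R / _; set kp := (_ ^+ L)^-1; set kq := (_ ^+ L)^-1.
pose y j := psiinv p j * conjc (psiinv q j).
rewrite /Kstar -[cinner _ _]/(\sum_(j < d) y j) -(multinomial_theorem y (leqnn L)).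
rewrite mulr_sumr; apply: eq_bigr => a _.
have prod_y : \prod_i psiinv p i ^+ a i * conjc (\prod_i psiinv q i ^+ a i)
              = \prod_i y i ^+ a i.
  rewrite rmorph_prod -big_split /=; apply: eq_bigr => i _; rewrite /y.
  by rewrite rmorphXn /= exprMn_comm //; exact: mulrC.
have sqr_sqrt_Ccoef : (Num.sqrt (Ccoef R a))%:C * (Num.sqrt (Ccoef R a))%:C
                      = c%:C * multinomial_coef C L a.
  rewrite -rmorphM -expr2 sqr_sqrtr /= ?Ccoef_multinomial //.
  by rewrite /Ccoef divr_ge0 // !mulr_ge0 // exprn_ge0 // pi_ge0.
rewrite !phistarE !conjcM !conjc_real.
transitivity (c%:C * multinomial_coef C L a * \prod_i y i ^+ a i * (kp%:C * kq%:C)).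
  by rewrite -sqr_sqrt_Ccoef -prod_y; ring.
by rewrite !rmorphM /=; ring.
Qed.

Lemma cabs_cinner_normalized d (p q : cvec R d.+1) : p ord0 != 0 -> q ord0 != 0 ->
  cabs (cinner (cscale (cnorm p)^-1%:C p) (cscale (cnorm q)^-1%:C q))
  = cabs (1 + cinner (psiinv p) (psiinv q))
    / (Num.sqrt (1 + cnorm (psiinv p) ^+ 2) * Num.sqrt (1 + cnorm (psiinv q) ^+ 2)).
Proof.
move=> p0 q0; rewrite cinnerZl cinnerZr conjc_real (cinner_psiinv p0 q0).
rewrite !cabsM cabsJ !ger0_cabs ?invr_ge0 ?sqrtr_ge0 //.
rewrite (cnorm_psiinv p0) (cnorm_psiinv q0).
have cabs_gt0 (x : C) : x != 0 -> 0 < cabs x.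
  by move=> x0; rewrite -ltcR cabsE normr_gt0.
have sqrt_gt0 (x : cvec R d) : 0 < Num.sqrt (1 + cnorm x ^+ 2).
  by rewrite sqrtr_gt0 ltr_wpDr ?sqr_ge0.
by field; rewrite !gt_eqF ?cabs_gt0 ?sqrt_gt0.
Qed.

End ProjectiveKernel.

Theorem lemma3p2 (R : realType) (d L : nat) (hd : (1 <= d)%N)
    (p q : cvec R d.+1) (hp : p ord0 != 0) (hq : q ord0 != 0) :
  cabs (Kstar L p q)
  = ('C(d + L, d) * d`!)%:R / pi ^+ d
    * cabs (cinner (cscale (cnorm p)^-1%:C p) (cscale (cnorm q)^-1%:C q)) ^+ L.
Proof.
rewrite KstarE cabs_cinner_normalized // cabsM cabsX ger0_cabs; last first.
  by rewrite mulr_ge0 ?divr_ge0 ?mulr_ge0 ?invr_ge0 ?exprn_ge0 ?sqrtr_ge0 ?ler0n ?pi_ge0.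
have fact_neq0 k : (k`!%:R : R) != 0 by rewrite pnatr_eq0 -lt0n fact_gt0.
have -> : ('C(d + L, d) * d`!)%:R = ((d + L)`!%:R / L`!%:R : R).
  by rewrite -(bin_fact (leq_addr L d)) addKn !natrM mulrA mulfK.
have sqrt_neq0 (x : cvec R d) : Num.sqrt (1 + cnorm x ^+ 2) ^+ L != 0.
  by rewrite expf_neq0 // gt_eqF // sqrtr_gt0 ltr_wpDr ?sqr_ge0.
have pi_neq0 : (pi : R) ^+ d != 0 by rewrite expf_neq0 // gt_eqF ?pi_gt0.
by rewrite expr_div_n exprMn; field; rewrite !sqrt_neq0 pi_neq0 fact_neq0.
Qed.
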